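(* Let $\delta\in\mathcal D^0$ and let $C$ be an absolutely continuous copula with multidiagonal $\delta$ and density $c$. Then for a.e. $u\in I^d$, for every $2\le i\le d$ and every $s\in I\setminus\Psi_i^\delta$, $c(u)\mathbf 1_{\{u_{(i-1)}<s<u_{(i)}\}}=0$. Equivalently, $c=0$ a.e. on $I^d\setminus L_\delta$.
   Context: $I=[0,1]$; $u_{(1)}\le\dots\le u_{(d)}$ are the ordered coordinates of $u$. A copula is a cdf on $\mathbb R^d$ with uniform-on-$I$ coordinates. For a copula $C$ and $U\sim C$ with order statistics $U_{(i)}$, the multidiagonal is $(\delta_{(i)})$ with $\delta_{(i)}(t)=\mathbb P(U_{(i)}\le t)$. $\mathcal D^0$ is the set of multidiagonals of absolutely continuous copulas. For $2\le i\le d$, $\Psi_i^\delta=\{s\in(0,1):\delta_{(i-1)}(s)>\delta_{(i)}(s)\}$, and $L_\delta=\{u\in I^d:(u_{(i-1)},u_{(i)})\subset\Psi_i^\delta\text{ for all }2\le i\le d\}$. *)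

From HB Require Import structures.
From mathcomp Require Import all_boot all_order all_algebra.
From mathcomp Require Import all_classical all_reals all_analysis.
Set Implicit Arguments. Unset Strict Implicit. Unset Printing Implicit Defensive.
Import Order.TTheory GRing.Theory Num.Theory.
Local Open Scope classical_set_scope.
Local Open Scope ring_scope.

Section Copulas.
Variable R : realType.

(* For nonnegative measurable f this is the integral of f against the
   n-dimensional Lebesgue measure (Tonelli). *)
Fixpoint intn (n : nat) : (n.-tuple R -> \bar R) -> \bar R :=
  match n return (n.-tuple R -> \bar R) -> \bar R with
  | 0 => fun f => f [tuple]
  | n'.+1 => fun f =>
      (\int[@lebesgue_measure R]_x intn (fun t : n'.-tuple R => f [tuple of x :: t]))%E
  end.

Definition lebn n (A : set (n.-tuple R)) : \bar R := intn (fun u => (\1_A u)%:E).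

Definition lebn_null n (N : set (n.-tuple R)) : Prop :=
  exists A : set (n.-tuple R), [/\ measurable A, N `<=` A & lebn A = 0%E].

Definition unit_cube n : set (n.-tuple R) :=
  [set u | forall j : 'I_n, 0 <= tnth u j <= 1].

Definition unif_cdf (t : R) : R := Num.min 1 (Num.max 0 t).

(* c is the density of an absolutely continuous copula C on R^d:
   the law of U ~ C is the probability measure A |-> \int_A c, its
   cdf is C, and each coordinate is uniform on I. *)
Definition abs_cont_copula_density d (C c : d.-tuple R -> R) : Prop :=
  [/\ measurable_fun [set: d.-tuple R] c,
      (forall v, 0 <= c v),
      intn (fun v => (c v)%:E) = 1%E,
      (forall (j : 'I_d) (t : R),
          intn (fun v => (c v * \1_[set w : d.-tuple R | tnth w j <= t] v)%:E)
          = (unif_cdf t)%:E)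
    & (forall u : d.-tuple R,
          (C u)%:E = intn (fun v =>
             (c v * \1_[set w : d.-tuple R | forall j, tnth w j <= tnth u j] v)%:E))].

(* order statistics, 1-based: ostat u i = u_(i) for 1 <= i <= d *)
Definition ostat d (u : d.-tuple R) (i : nat) : R :=
  nth 0 (sort <=%R (tval u)) i.-1.

(* multidiagonal of the copula with density c (1-based):
   mdiag c i t = P(U_(i) <= t) = \int c 1_{u_(i) <= t} *)
Definition mdiag d (c : d.-tuple R -> R) (i : nat) (t : R) : \bar R :=
  intn (fun v => (c v * \1_[set w : d.-tuple R | ostat w i <= t] v)%:E).

Definition Psi d (c : d.-tuple R -> R) (i : nat) : set R :=
  [set s | 0 < s < 1 /\ (mdiag c i s < mdiag c i.-1 s)%E].

Definition Ldelta d (c : d.-tuple R -> R) : set (d.-tuple R) :=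
  [set u | unit_cube u /\
     forall i : nat, (2 <= i <= d)%N ->
       [set s | ostat u i.-1 < s < ostat u i] `<=` Psi c i].

End Copulas.

(* If s lies outside Psi_i, i.e. delta_(i-1)(s) <= delta_(i)(s), then, since
   {U_(i) <= s} is contained in {U_(i-1) <= s}, the event
   {U_(i-1) <= s < U_(i)} has probability zero, so c vanishes a.e. on it.
   Any u with c(u) != 0 and u_(i-1) < s < u_(i) for such an s lies in the
   event {u_(i-1) <= p, q < u_(i)} with p < s < q rational, which is
   contained in the null event attached to s; the countably many rational
   pairs (p, q) then cover the exceptional set by a null set. *)
From HB Require Import structures.
From mathcomp Require Import all_boot all_order all_algebra.
From mathcomp Require Import all_classical all_reals all_analysis.
From mathcomp Require Import measurable_realfun.
Set Implicit Arguments. Unset Strict Implicit. Unset Printing Implicit Defensive.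
Import Order.TTheory GRing.Theory Num.Theory.
Local Open Scope classical_set_scope.
Local Open Scope ring_scope.

Section IteratedIntegral.
Variable R : realType.
Local Open Scope ereal_scope.

Lemma intn0 n : intn (fun _ : n.-tuple R => 0) = 0.
Proof.
elim: n => [|n IH] //=.
by rewrite (eq_integral (fun _ => 0)) ?integral0.
Qed.

Lemma lebn_set0 n : lebn (@set0 (n.-tuple R)) = 0.
Proof.
by rewrite /lebn (_ : (fun u => _) = fun _ => 0) ?intn0 //; apply/funext => u; rewrite indic0.
Qed.

Lemma intn_ge0 n (f : n.-tuple R -> \bar R) : (forall t, 0 <= f t) -> 0 <= intn f.
Proof.
elim: n f => [|n IH] f f0 /=; first exact: f0.
by apply: integral_ge0 => x _; apply: IH.
Qed.

Lemma measurable_intn n d' (T : measurableType d') (f : T -> n.-tuple R -> \bar R) :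
  measurable_fun setT (fun p : T * n.-tuple R => f p.1 p.2) ->
  (forall x t, 0 <= f x t) -> measurable_fun setT (fun x => intn (f x)).
Proof.
elim: n d' T f => [|n IH] d' T f mf f0 /=.
  exact: (measurableT_comp (f := fun p : T * 0.-tuple R => f p.1 p.2)
    (g := fun x => (x, [tuple]))).
pose g (p : T * R) (t : n.-tuple R) := f p.1 [tuple of p.2 :: t].
have mg : measurable_fun setT (fun q : (T * R) * n.-tuple R => g q.1 q.2).
  apply: (measurableT_comp (f := fun p : T * n.+1.-tuple R => f p.1 p.2)
    (g := fun q : (T * R) * n.-tuple R => (q.1.1, [tuple of q.1.2 :: q.2]))) => //.
  apply: measurable_fun_pair.
    exact: measurableT_comp measurable_fst measurable_fst.
  apply: measurable_cons; last exact: measurable_snd.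
  exact: measurableT_comp measurable_snd measurable_fst.
by have := @measurable_fun_fubini_tonelli_F _ _ _ _ _ (@lebesgue_measure R)
  (fun p => intn (g p)) (IH _ _ g mg (fun x t => f0 _ _))
  (fun p => intn_ge0 (fun t => f0 _ _)).
Qed.

Lemma measurable_intn_section n (f : n.+1.-tuple R -> \bar R) :
  measurable_fun setT f -> (forall t, 0 <= f t) ->
  measurable_fun setT (fun y : R => intn (fun t : n.-tuple R => f [tuple of y :: t])).
Proof.
move=> mf f0; apply: (measurable_intn (f := fun y t => f [tuple of y :: t])) => //.
apply: (measurableT_comp (f := f)) => //.
exact: measurable_cons measurable_fst measurable_snd.
Qed.

Lemma measurable_section n (f : n.+1.-tuple R -> \bar R) (y : R) :
  measurable_fun setT f -> measurable_fun setT (fun t : n.-tuple R => f [tuple of y :: t]).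
Proof.
move=> mf; apply: (measurableT_comp (f := f)) => //.
exact: measurable_cons.
Qed.

Lemma intnD n (f g : n.-tuple R -> \bar R) :
  measurable_fun setT f -> measurable_fun setT g ->
  (forall t, 0 <= f t) -> (forall t, 0 <= g t) ->
  intn (fun t => f t + g t) = intn f + intn g.
Proof.
elim: n f g => [|n IH] f g mf mg f0 g0 //=.
rewrite -ge0_integralD //; first last.
- exact: measurable_intn_section.
- by move=> y _; apply: intn_ge0.
- exact: measurable_intn_section.
- by move=> y _; apply: intn_ge0.
by apply: eq_integral => y _; apply: IH => //; apply: measurable_section.
Qed.

Lemma intn_eq0_cover n (fk : nat -> n.-tuple R -> \bar R) (g : n.-tuple R -> \bar R) :
  (forall k, measurable_fun setT (fk k)) -> (forall k t, 0 <= fk k t) ->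
  measurable_fun setT g -> (forall t, 0 <= g t) ->
  (forall k, intn (fk k) = 0) -> (forall t, g t != 0 -> exists k, fk k t != 0) ->
  intn g = 0.
Proof.
elim: n fk g => [|n IH] fk g mfk fk0 mg g0 int0 cover /=.
  by apply/eqP/negPn/negP => /cover [k]; have := int0 k => /= ->; rewrite eqxx.
have sec_ae0 k : ae_eq (@lebesgue_measure R) setT
    (fun y => intn (fun t : n.-tuple R => fk k [tuple of y :: t])) (cst 0).
  apply/ae_eq_integral_abs => //; first exact: measurable_intn_section.
  rewrite -[RHS](int0 k) /=; apply: eq_integral => y _.
  by rewrite gee0_abs //; apply: intn_ge0.
have secg_ae0 : ae_eq (@lebesgue_measure R) setT
    (fun y => intn (fun t : n.-tuple R => g [tuple of y :: t])) (cst 0).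
  apply: filterS (ae_foralln sec_ae0) => y secy0 _.
  apply: (IH (fun k t => fk k [tuple of y :: t])) => //.
  - by move=> k; apply: measurable_section.
  - exact: measurable_section.
  - by move=> k; apply: secy0.
  - by move=> t /cover.
rewrite (ae_eq_integral (cst 0) _ measurableT _ _ secg_ae0) ?integral0 //.
exact: measurable_intn_section.
Qed.

End IteratedIntegral.

Section OrderStatistics.
Variable R : realType.

Definition ostat_le_set d (k : nat) (t : R) : set (d.-tuple R) :=
  [set w | ostat w k <= t].
Arguments ostat_le_set : clear implicits.

Lemma sorted_nth_leE (s : seq R) j t : sorted <=%R s -> (j < size s)%N ->
  (nth 0 s j <= t) = (j < count (<= t) s)%N.
Proof.
elim: s j => [|x s IH] j //= xs_sorted j_lt.
have count0 : t < x -> count (<= t) s = 0%N.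
  move=> tx; apply/eqP; rewrite -leqn0 leqNgt -has_count; apply/hasPn => y ys.
  by rewrite -ltNge (lt_le_trans tx) // (allP (order_path_min le_trans xs_sorted)).
case: j j_lt => [|j] j_lt /=; first by case: leP => // /count0 ->.
rewrite IH ?(path_sorted xs_sorted) //.
by case: leP => [_|/count0 ->]; rewrite ?add1n.
Qed.

Lemma ostat_leE d (w : d.-tuple R) k t : (1 <= k <= d)%N ->
  (ostat w k <= t) = (k <= count (<= t) w)%N.
Proof.
case: k => // k /andP[_ kd].
rewrite /ostat sorted_nth_leE ?(sort_sorted le_total) ?size_sort ?size_tuple //.
by rewrite (permP (permEl (perm_sort _ _))).
Qed.

Lemma count_le_sum_indic d (w : d.-tuple R) t :
  (count (<= t) w)%:R = \sum_(j < d) \1_`]-oo, t] (tnth w j) :> R.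
Proof.
rewrite -[in LHS](map_tnth_enum w) count_map -sum1_count natr_sum big_enum_cond.
rewrite big_mkcond /=; apply: eq_bigr => j _.
rewrite indicE; case: (boolP (tnth w j <= t)) => le_t.
  by rewrite mem_set //= in_itv /= le_t.
by rewrite memNset //= in_itv /= (negbTE le_t).
Qed.

Lemma measurable_ostat_le_set d k t : (1 <= k <= d)%N ->
  measurable (ostat_le_set d k t).
Proof.
move=> kd.
pose cnt (w : d.-tuple R) := \sum_(j < d) \1_`]-oo, t] (tnth w j) : R.
have mcnt : measurable_fun setT cnt.
  apply: measurable_sum => j; apply: measurableT_comp; last exact: measurable_tnth.
  exact: measurable_indic.
have -> : ostat_le_set d k t = cnt @^-1` `[k%:R, +oo[.
  apply/seteqP; split => w;
    by rewrite /ostat_le_set /= in_itv /= andbT /cnt -count_le_sum_indic ler_nat ostat_leE.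
by rewrite -[X in measurable X]setTI; apply: mcnt.
Qed.

Lemma ostat_le_set_pred d k t : (2 <= k <= d)%N ->
  ostat_le_set d k t `<=` ostat_le_set d k.-1 t.
Proof.
case: k => [|[|k]] // /andP[_ kd] w.
by rewrite /ostat_le_set /= !ostat_leE ?(ltnW kd) //; apply: ltnW.
Qed.

Lemma consecutive_index_range i d : (2 <= i <= d)%N ->
  (1 <= i.-1 <= d)%N /\ (1 <= i <= d)%N.
Proof. by case: i => [|[|i]] //= id; rewrite id ltnW. Qed.

Lemma ostat_unit_cube d (u : d.-tuple R) k : unit_cube u -> (1 <= k <= d)%N ->
  0 <= ostat u k <= 1.
Proof.
case: k => // k u_cube /andP[_ kd].
have : ostat u k.+1 \in tval u.
  by rewrite -(perm_mem (permEl (perm_sort <=%R _))) mem_nth // size_sort size_tuple.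
by move=> /tnthP [j ->]; apply: u_cube.
Qed.

End OrderStatistics.
Arguments ostat_le_set {R} d k t.

Section VanishingDensity.
Variables (R : realType) (d : nat) (c : d.-tuple R -> R).
Hypotheses (mc : measurable_fun setT c) (c_ge0 : forall v, 0 <= c v)
  (c_fin : intn (fun v => (c v)%:E) \is a fin_num).

Let mc_indic (A : set (d.-tuple R)) : measurable A ->
  measurable_fun setT (fun v => (c v * \1_A v)%:E).
Proof.
by move=> mA; apply/measurable_EFinP/measurable_funM => //; apply: measurable_indic.
Qed.

Let c_indic_ge0 (A : set (d.-tuple R)) v : (0 <= (c v * \1_A v)%:E)%E.
Proof. by rewrite lee_fin mulr_ge0. Qed.

Lemma intn_indic_split (A B : set (d.-tuple R)) : measurable A -> measurable B ->
  B `<=` A ->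
  intn (fun v => (c v * \1_A v)%:E) =
  (intn (fun v => (c v * \1_B v)%:E) + intn (fun v => (c v * \1_(A `\` B) v)%:E))%E.
Proof.
move=> mA mB BA; have mcB := mc_indic mB; have mcAB := mc_indic (measurableD mA mB).
rewrite -intnD //.
congr intn; apply/funext => v; rewrite -EFinD -mulrDr !indicE in_setD.
case: (boolP (v \in B)) => vB; last by rewrite andbT add0r.
by rewrite (mem_set (BA _ (set_mem vB))) addr0.
Qed.

Lemma mdiag_fin_num k t : (1 <= k <= d)%N -> mdiag c k t \is a fin_num.
Proof.
move=> kd; have mS := measurable_ostat_le_set t kd.
rewrite ge0_fin_numE; last exact: intn_ge0.
apply: le_lt_trans (_ : intn (fun v => (c v)%:E) < +oo)%E; last first.
  by rewrite ltey_eq c_fin.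
rewrite [leRHS](_ : _ = intn (fun v => (c v * \1_setT v)%:E)); last first.
  by congr intn; apply/funext => v; rewrite indicT mulr1.
rewrite (intn_indic_split measurableT mS) //; apply: leeDl.
exact: intn_ge0.
Qed.

Lemma intn_ostat_gap_eq0 i s : (2 <= i <= d)%N -> 0 < s < 1 -> ~ Psi c i s ->
  intn (fun v => (c v * \1_(ostat_le_set d i.-1 s `\` ostat_le_set d i s) v)%:E)
  = 0%E.
Proof.
move=> i_range s01 notPsi; have [i1d id] := consecutive_index_range i_range.
have mS1 := measurable_ostat_le_set s i1d.
have mS := measurable_ostat_le_set s id.
have le_mdiag : (mdiag c i.-1 s <= mdiag c i s)%E.
  by rewrite leNgt; apply/negP => lt_mdiag; apply: notPsi.
move: le_mdiag; rewrite /mdiag (intn_indic_split mS1 mS (ostat_le_set_pred i_range)).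
rewrite -{2}[intn _]adde0 leeD2lE; last exact: mdiag_fin_num s id.
by move=> le0; apply: le_anti; rewrite le0 intn_ge0.
Qed.

Definition gap_witness (i : nat) (p q : rat) : Prop :=
  exists s, [/\ (2 <= i <= d)%N, 0 < s < 1, ~ Psi c i s & ratr p < s < ratr q].

Definition gap_block (i : nat) (p q : rat) : set (d.-tuple R) :=
  if pselect (gap_witness i p q)
  then c @^-1` [set~ 0] `&` ostat_le_set d i.-1 (ratr p) `\` ostat_le_set d i (ratr q)
  else set0.

Definition gap_block_nat (k : nat) : set (d.-tuple R) :=
  if unpickle k is Some (i, p, q) then gap_block i p q else set0.

Definition gap_set : set (d.-tuple R) := \bigcup_k gap_block_nat k.

Lemma measurable_gap_block i p q : measurable (gap_block i p q).
Proof.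
rewrite /gap_block; case: pselect => [gap_s|_] /=; last exact: measurable0.
have [s [i_range _ _ _]] := gap_s; have [i1d id] := consecutive_index_range i_range.
apply: measurableD; last exact: measurable_ostat_le_set.
apply: measurableI; last exact: measurable_ostat_le_set.
by rewrite -[X in measurable X]setTI; apply: mc measurableT _ (measurableC (measurable_set1 0)).
Qed.

Lemma measurable_gap_block_nat k : measurable (gap_block_nat k).
Proof.
by rewrite /gap_block_nat; case: unpickle => [[[]]|]; [apply: measurable_gap_block|].
Qed.

Lemma measurable_gap_set : measurable gap_set.
Proof. exact: bigcupT_measurable measurable_gap_block_nat. Qed.

Lemma lebn_gap_block i p q : lebn (gap_block i p q) = 0%E.
Proof.
move: (measurable_gap_block i p q); rewrite /lebn /gap_block.
case: pselect => [gap_s|_] /= mB; last exact: lebn_set0.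
have [s [i_range s01 notPsi /andP[ps sq]]] := gap_s.
have [i1d id] := consecutive_index_range i_range.
apply: (@intn_eq0_cover R d (fun _ v => (c v * \1_(ostat_le_set d i.-1 s
    `\` ostat_le_set d i s) v)%:E)) => //.
- by move=> _; apply: mc_indic; apply: measurableD; apply: measurable_ostat_le_set.
- by apply/measurable_EFinP; apply: measurable_indic.
- by move=> _; apply: intn_ostat_gap_eq0.
move=> v; rewrite indicE; case: (boolP (v \in _)) => [/set_mem [[cv0 vp] vq] _|_];
  last by rewrite eqe eqxx.
exists 0%N; rewrite indicE mem_set ?mulr1 ?eqe; first exact/eqP.
split.
  by apply: le_trans vp _; apply: ltW.
by move=> vs; apply: vq; apply: le_trans vs _; apply: ltW.
Qed.

Lemma lebn_gap_set : lebn gap_set = 0%E.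
Proof.
apply: (@intn_eq0_cover R d (fun k v => (\1_(gap_block_nat k) v)%:E)).
- by move=> k; apply/measurable_EFinP/measurable_indic; apply: measurable_gap_block_nat.
- by move=> k v; rewrite lee_fin.
- by apply/measurable_EFinP/measurable_indic; apply: measurable_gap_set.
- by move=> v; rewrite lee_fin.
- move=> k; rewrite -/(lebn _) /gap_block_nat.
  by case: unpickle => [[[]]|]; [apply: lebn_gap_block|apply: lebn_set0].
move=> v; rewrite indicE; case: (boolP (v \in gap_set)) => [/set_mem [k _ vk] _|_];
  last by rewrite eqe eqxx.
by exists k; rewrite indicE mem_set ?eqe ?oner_neq0.
Qed.

Lemma gap_set_cover u i s : unit_cube u -> c u != 0 -> (2 <= i <= d)%N ->
  ostat u i.-1 < s < ostat u i -> ~ Psi c i s -> gap_set u.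
Proof.
move=> u_cube cu0 i_range /andP[lt_s s_lt] notPsi.
have [i1d id] := consecutive_index_range i_range.
have /andP[ge0 _] := ostat_unit_cube u_cube i1d.
have /andP[_ le1] := ostat_unit_cube u_cube id.
have [p] := rat_in_itvoo lt_s; rewrite in_itv /= => /andP[lt_p ps].
have [q] := rat_in_itvoo s_lt; rewrite in_itv /= => /andP[sq q_lt].
exists (pickle (i, p, q)) => //; rewrite /gap_block_nat pickleK /gap_block.
case: pselect => [_|no_gap] /=; last first.
  apply: no_gap; exists s; split; rewrite ?ps ?sq //.
  by rewrite (le_lt_trans ge0 lt_s) (lt_le_trans s_lt le1).
split; first by split; [apply/eqP | apply: ltW].
by move=> /(lt_le_trans q_lt); rewrite ltxx.
Qed.

End VanishingDensity.

Theorem mainTheorem17 (R : realType) (d : nat) (C c : d.-tuple R -> R) :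
  abs_cont_copula_density C c ->
  (* for a.e. u in I^d, for all 2 <= i <= d and s in I \ Psi_i,
     c(u) 1_{u_(i-1) < s < u_(i)} = 0 *)
  lebn_null [set u | unit_cube u /\
     ~ (forall i : nat, (2 <= i <= d)%N ->
        forall s : R, 0 <= s <= 1 -> ~ Psi c i s ->
          c u * (\1_[set t | ostat u i.-1 < t < ostat u i] s : R) = 0)]
  /\
  (* equivalently: c = 0 a.e. on I^d \ L_delta *)
  lebn_null [set u | (@unit_cube R d `\` Ldelta c) u /\ c u != 0].
Proof.
case=> mc c_ge0 c1 _ _.
have c_fin : intn (fun v => (c v)%:E) \is a fin_num by rewrite c1.
have cover := @gap_set_cover R d c.
split; exists (gap_set c); split;
  do ?[exact: measurable_gap_set mc | exact: lebn_gap_set mc c_ge0 c_fin].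
- move=> u [u_cube /existsNP [i /not_implyP [i_range /existsNP [s /not_implyP
    [_ /not_implyP [notPsi /eqP cu_gap]]]]]].
  have cu0 : c u != 0 by apply: contra cu_gap => /eqP ->; rewrite mul0r.
  have gap : ostat u i.-1 < s < ostat u i.
    apply/negPn/negP => no_gap; move/eqP: cu_gap; apply.
    by rewrite indicE memNset ?mulr0 //; apply/negP.
  exact: cover u_cube cu0 i_range gap notPsi.
- move=> u [[u_cube notL] cu0].
  have /existsNP [i /not_implyP [i_range /existsNP [s /not_implyP [gap notPsi]]]] :
    ~ (forall i, (2 <= i <= d)%N -> [set s | ostat u i.-1 < s < ostat u i] `<=` Psi c i).
    by move=> inL; apply: notL.
  exact: cover u_cube cu0 i_range gap notPsi.
Qed.
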